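(* Let $y_0\in E$ and suppose: (A1) $\eta>0$ on $[y_0,\infty)$ and $\eta\in C^2([y_0,\infty))$; (A2) $b^2/\eta$, $\tilde a/\eta$, $\eta'/\eta$ are bounded on $[y_0,\infty)$; (A3) $\Psi\eta(y)\to1$ as $y\to\infty$. Let $u$ be a solution of $0=\tfrac12b^2u''+\tilde au'+\eta u-u^2-d\frac{(u')^2}{u}$ on $[y_0,\infty)$ with $C_1\eta\le u\le C_2\eta$ there for some $0<C_1<C_2$. Assume that there are constants $K_1,K_2\neq0$ with $\frac{\tilde a}{\eta}+(b^2-2d)\frac{\eta'}{\eta^2}\to K_1$ and $\frac d\eta\to K_2$ as $y\to\infty$, and that $\eta'(y)/\eta(y)\to0$ as $y\to\infty$. Then $u'(y)/u(y)\to0$ as $y\to\infty$.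
   Context: $E=(E_-,\infty)$ with $E_-\in\{-\infty\}\cup\mathbb R$. $r,\lambda,\sigma,a,b,\rho,\delta:E\to\mathbb R$ are locally Lipschitz with $\sigma>0$, $b(y)\neq0$, $\rho(y)\in[-1,1]$; $R\in(0,\infty)\setminus\{1\}$. Define $\eta=\frac1R\big(\delta-(1-R)(r+\frac{\lambda^2}{2R})\big)$, $\tilde a=a+\frac{1-R}{R}\rho\lambda b$, $d=\frac12b^2((1-\rho^2)R+\rho^2+1)$, and for positive $g\in C^2$, $\Psi g=1+\frac{\frac12b^2g''+\tilde ag'}{g^2}-d\frac{(g')^2}{g^3}$. *)

From Stdlib Require Import Reals.
From Coquelicot Require Import Coquelicot.
Open Scope R_scope.

(* E = (E_-, +oo) with E_- in {-oo} ∪ R, encoded by Em : Rbar. *)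
Definition inE (Em : Rbar) (y : R) : Prop := Rbar_lt Em y.

Definition loc_lipschitz_on (D : R -> Prop) (f : R -> R) : Prop :=
  forall x, D x -> exists eps : R, 0 < eps /\ exists L : R,
    forall y z, D y -> D z -> Rabs (y - x) < eps -> Rabs (z - x) < eps ->
      Rabs (f y - f z) <= L * Rabs (y - z).

Definition eta_fn (Rr : R) (r lam delta : R -> R) (y : R) : R :=
  / Rr * (delta y - (1 - Rr) * (r y + lam y ^ 2 / (2 * Rr))).

Definition atilde_fn (Rr : R) (a rho lam b : R -> R) (y : R) : R :=
  a y + (1 - Rr) / Rr * rho y * lam y * b y.

Definition d_fn (Rr : R) (b rho : R -> R) (y : R) : R :=
  1 / 2 * b y ^ 2 * ((1 - rho y ^ 2) * Rr + rho y ^ 2 + 1).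

(* Psi g, where g1, g2 are (the functions) g' and g''. *)
Definition Psi (b at_ d : R -> R) (g g1 g2 : R -> R) (y : R) : R :=
  1 + (1 / 2 * b y ^ 2 * g2 y + at_ y * g1 y) / g y ^ 2
    - d y * g1 y ^ 2 / g y ^ 3.

Definition ray (y0 : R) : R -> Prop := fun y => y0 <= y.

Definition is_deriv_within (D : R -> Prop) (f : R -> R) (x l : R) : Prop :=
  filterlim (fun z => (f z - f x) / (z - x))
    (within (fun z => D z /\ z <> x) (locally x)) (locally l).

Definition cont_within (D : R -> Prop) (f : R -> R) (x : R) : Prop :=
  filterlim f (within D (locally x)) (locally (f x)).

Definition bounded_on (D : R -> Prop) (f : R -> R) : Prop :=
  exists M : R, forall y, D y -> Rabs (f y) <= M.

From Stdlib Require Import Reals Lra Classical.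
From Coquelicot Require Import Coquelicot.
Open Scope R_scope.

(* Put w = u/η and q = u'/u - η'/η = (ln w)'. Eliminating u'' with the equation gives the
   Riccati equation
     q' = (2η/b²) (E q² - K q + w - 1 - ε),   E = d/η - b²/(2η),   ε = Ψη - 1,
   in which K is the coefficient assumed to tend to K1 ≠ 0, E is eventually bounded and
   ε → 0. Since C1 ≤ w ≤ C2, q can stay neither above some s > 0 nor below -s for ever.
   First w → 1: while w > 1 + δ the forcing term pushes q up, so once q ≥ 0 it stays so and
   w never comes down; the forcing then stays positive and drives q above a fixed small level
   for ever, which is impossible. Symmetrically w < 1 - δ cannot persist. Then the forcing
   w - 1 - ε tends to 0, and at q = ±s the sign of q' is that of ∓K1: for K1 > 0 the band
   [-s, s] is eventually entered and never left, for K1 < 0 leaving it would be for ever.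
   Finally u'/u = q + η'/η → 0. *)

Lemma increment_ge_of_derive_ge (f df : R -> R) (a t1 t2 c : R) :
  (forall t, a < t -> derivable_pt_lim f t (df t)) -> a < t1 -> t1 <= t2 ->
  (forall t, t1 <= t <= t2 -> c <= df t) -> f t1 + c * (t2 - t1) <= f t2.
Proof.
  intros Hd Ha Ht Hc.
  destruct (Req_dec t1 t2) as [<- | Hne]; [lra |].
  destruct (MVT_cor3 f df t1 t2) as [x [Hx1 [Hx2 ->]]];
    [lra | intros x Hx1 Hx2; apply Hd; lra |].
  specialize (Hc x (conj Hx1 Hx2)). nra.
Qed.

Lemma derive_ge_pos_unbounded (f df : R -> R) (a t1 c M : R) :
  (forall t, a < t -> derivable_pt_lim f t (df t)) -> a < t1 -> 0 < c ->
  (forall t, t1 <= t -> c <= df t) -> ~ (forall t, t1 <= t -> f t <= M).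
Proof.
  intros Hd Ha Hc Hdf HM.
  set (t2 := t1 + Rabs (M - f t1) / c + 1).
  assert (Hgap : c * (t2 - t1) = Rabs (M - f t1) + c) by (unfold t2; field; lra).
  assert (Ht2 : t1 <= t2).
  { assert (0 <= Rabs (M - f t1) / c) by (apply Rdiv_le_0_compat; [apply Rabs_pos | lra]).
    unfold t2; lra. }
  pose proof (increment_ge_of_derive_ge f df a t1 t2 c Hd Ha Ht2 (fun t Ht => Hdf t (proj1 Ht))).
  pose proof (HM t2 Ht2). pose proof (Rle_abs (M - f t1)). lra.
Qed.

Lemma continuity_pt_eps (f : R -> R) (x e : R) : continuity_pt f x -> 0 < e ->
  exists del, 0 < del /\ forall z, Rabs (z - x) < del -> Rabs (f z - f x) < e.
Proof.
  intros Hc He.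
  destruct (proj1 (continuity_pt_locally f x) Hc (mkposreal e He)) as [del Hdel].
  exists del. split; [apply cond_pos | intros z Hz; apply (Hdel z Hz)].
Qed.

Lemma continuity_pt_ge_from_left (f : R -> R) (L t0 m : R) :
  continuity_pt f m -> t0 < m -> (forall tau, t0 <= tau < m -> L <= f tau) -> L <= f m.
Proof.
  intros Hc Hm Hbefore. apply Rnot_lt_le. intro Hlt.
  destruct (continuity_pt_eps f m (L - f m) Hc ltac:(lra)) as [del [Hdel Hnear]].
  set (tau := Rmax t0 (m - del / 2)).
  assert (t0 <= tau < m) by (split; [apply Rmax_l | apply Rmax_lub_lt; lra]).
  assert (m - del / 2 <= tau) by apply Rmax_r.
  assert (Hfar : Rabs (f tau - f m) < L - f m) by (apply Hnear; rewrite Rabs_left; lra).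
  apply Rabs_def2 in Hfar. specialize (Hbefore tau ltac:(lra)). lra.
Qed.

Lemma first_exit_below (f : R -> R) (L t0 t1 : R) :
  (forall t, t0 <= t <= t1 -> continuity_pt f t) -> t0 <= t1 -> L <= f t0 -> f t1 < L ->
  exists m, t0 <= m < t1 /\ f m = L /\ (forall s, t0 <= s <= m -> L <= f s) /\
    (forall del, 0 < del -> exists z, m < z < m + del /\ f z < L).
Proof.
  intros Hc Ht01 H0 H1.
  set (S s := t0 <= s <= t1 /\ forall tau, t0 <= tau <= s -> L <= f tau).
  assert (HS0 : S t0)
    by (split; [lra | intros tau Htau; replace tau with t0 by lra; exact H0]).
  destruct (completeness S) as [m [Hub Hlub]];
    [exists t1; intros s Hs; apply Hs | exists t0; exact HS0 |].
  assert (Hm0 : t0 <= m) by (apply Hub, HS0).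
  assert (Hm1 : m <= t1) by (apply Hlub; intros s Hs; apply Hs).
  assert (Hbefore : forall tau, t0 <= tau < m -> L <= f tau).
  { intros tau Htau. apply Rnot_lt_le. intro Hlt.
    assert (m <= tau); [| lra].
    apply Hlub. intros s [_ Hs]. apply Rnot_lt_le. intro.
    specialize (Hs tau ltac:(lra)). lra. }
  assert (Hat : L <= f m).
  { destruct (Req_dec t0 m) as [<- | Hne]; [exact H0 |].
    apply (continuity_pt_ge_from_left f L t0 m); [apply Hc; lra | lra | exact Hbefore]. }
  assert (Hupto : forall s, t0 <= s <= m -> L <= f s).
  { intros s Hs. destruct (Req_dec s m) as [-> | ]; [exact Hat | apply Hbefore; lra]. }
  assert (Hm : m < t1) by (destruct (Req_dec m t1) as [-> |]; lra).
  assert (Hexit : forall del, 0 < del -> exists z, m < z < m + del /\ f z < L).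
  { intros del Hdel. apply NNPP. intro Hno.
    set (z := Rmin (m + del / 2) t1).
    assert (m < z) by (apply Rmin_glb_lt; lra).
    assert (z <= m + del / 2) by apply Rmin_l.
    assert (z <= t1) by apply Rmin_r.
    assert (S z); [| specialize (Hub z ltac:(assumption)); lra].
    split; [lra |]. intros tau Htau.
    destruct (Rle_or_lt tau m); [apply Hupto; lra |].
    apply Rnot_lt_le. intro. apply Hno. exists tau. split; lra. }
  exists m. repeat split; try lra; [| exact Hupto | exact Hexit].
  apply Rle_antisym; [| exact Hat]. apply Rnot_lt_le. intro Hgt.
  destruct (continuity_pt_eps f m (f m - L) (Hc m ltac:(lra)) ltac:(lra)) as [del [Hdel Hnear]].
  destruct (Hexit del Hdel) as [z [Hz Hfz]].
  assert (Hfar : Rabs (f z - f m) < f m - L) by (apply Hnear; rewrite Rabs_right; lra).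
  apply Rabs_def2 in Hfar. lra.
Qed.

Lemma derive_pos_right (f : R -> R) (m l : R) : derivable_pt_lim f m l -> 0 < l ->
  exists del, 0 < del /\ forall z, m < z < m + del -> f m < f z.
Proof.
  intros Hd Hl. destruct (Hd l Hl) as [del Hdel].
  exists del. split; [apply cond_pos |]. intros z Hz.
  assert (Hquot : Rabs ((f (m + (z - m)) - f m) / (z - m) - l) < l)
    by (apply Hdel; [lra | rewrite Rabs_right; lra]).
  replace (m + (z - m)) with z in Hquot by ring.
  apply Rabs_def2 in Hquot.
  set (slope := (f z - f m) / (z - m)) in Hquot.
  assert (f z - f m = slope * (z - m)) by (unfold slope; field; lra).
  nra.
Qed.

Lemma barrier_lower (f df : R -> R) (a t0 L : R) :
  (forall t, a < t -> derivable_pt_lim f t (df t)) -> a < t0 -> L <= f t0 ->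
  (forall t, t0 <= t -> (forall s, t0 <= s <= t -> L <= f s) -> f t = L -> 0 < df t) ->
  forall t, t0 <= t -> L <= f t.
Proof.
  intros Hd Ha H0 Hcross t1 Ht1. apply Rnot_lt_le. intro Hlt.
  assert (Hcont : forall t, t0 <= t <= t1 -> continuity_pt f t)
    by (intros t Ht; exact (derivable_continuous_pt f t (exist _ (df t) (Hd t ltac:(lra))))).
  destruct (first_exit_below f L t0 t1 Hcont Ht1 H0 Hlt) as [m [Hm [Hfm [Hupto Hexit]]]].
  destruct (derive_pos_right f m (df m) (Hd m ltac:(lra)) (Hcross m ltac:(lra) Hupto Hfm))
    as [del [Hdel Hinc]].
  destruct (Hexit del Hdel) as [z [Hz Hfz]].
  specialize (Hinc z Hz). lra.
Qed.

Lemma barrier_upper (f df : R -> R) (a t0 L : R) :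
  (forall t, a < t -> derivable_pt_lim f t (df t)) -> a < t0 -> f t0 <= L ->
  (forall t, t0 <= t -> (forall s, t0 <= s <= t -> f s <= L) -> f t = L -> df t < 0) ->
  forall t, t0 <= t -> f t <= L.
Proof.
  intros Hd Ha H0 Hcross t Ht.
  enough (-L <= - f t) by lra.
  apply (barrier_lower (fun x => - f x) (fun x => - df x) a t0 (- L)); [| lra | lra | | lra].
  - intros x Hx. apply derivable_pt_lim_opp, Hd, Hx.
  - intros x Hx Hupto Hfx. enough (df x < 0) by lra.
    apply Hcross; [lra | | lra]. intros s Hs. specialize (Hupto s Hs). lra.
Qed.

Lemma lim_eventually_close (f : R -> R) (l e : R) : is_lim f p_infty l -> 0 < e ->
  exists T, forall t, T < t -> Rabs (f t - l) < e.
Proof.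
  intros H He. destruct (proj2 (is_lim_spec f p_infty l) H (mkposreal e He)) as [T HT].
  exists T. exact HT.
Qed.

Lemma eventually_close_lim (f : R -> R) (l : R) :
  (forall e, 0 < e -> exists T, forall t, T < t -> Rabs (f t - l) < e) -> is_lim f p_infty l.
Proof.
  intros H. apply is_lim_spec. intros [e He]. destruct (H e He) as [T HT].
  exists T. exact HT.
Qed.

Definition liminf_nonpos (f : R -> R) : Prop :=
  forall s t1, 0 < s -> exists t, t1 <= t /\ f t < s.

Definition oscillates_about_zero (f : R -> R) : Prop :=
  liminf_nonpos f /\ liminf_nonpos (fun t => - f t).

Lemma oscillates_about_zero_opp (f : R -> R) :
  oscillates_about_zero f -> oscillates_about_zero (fun t => - f t).
Proof.
  intros [Hlo Hhi]. split; [exact Hhi |].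
  intros s t1 Hs. destruct (Hlo s t1 Hs) as [t [Ht Hft]]. exists t. split; [exact Ht | lra].
Qed.

Lemma liminf_nonpos_of_primitive_bounded_above (v om q : R -> R) (a c M : R) :
  (forall t, a < t -> derivable_pt_lim v t (om t * q t)) -> 0 < c ->
  (forall t, a < t -> c <= om t) -> (forall t, a < t -> v t <= M) -> liminf_nonpos q.
Proof.
  intros Hv Hc Hom HM s t1 Hs. apply NNPP. intro Hno.
  set (t2 := Rmax t1 (a + 1)).
  assert (t1 <= t2 /\ a + 1 <= t2) as [Ht12 Hat2] by (split; [apply Rmax_l | apply Rmax_r]).
  apply (derive_ge_pos_unbounded v (fun t => om t * q t) a t2 (c * s) M Hv);
    [lra | nra | | intros t Ht; apply HM; lra].
  intros t Ht.
  assert (s <= q t) by (apply Rnot_lt_le; intro; apply Hno; exists t; split; lra).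
  specialize (Hom t ltac:(lra)). nra.
Qed.

Lemma quadratic_small (e k x Em Km s : R) :
  Rabs e <= Em -> Rabs k <= Km -> Rabs x <= s -> s <= 1 ->
  Rabs (e * x ^ 2 - k * x) <= (Em + Km) * s.
Proof.
  intros He Hk Hx Hs.
  apply Rabs_le_between in He, Hk, Hx.
  assert (x ^ 2 <= s) by nra.
  apply Rabs_le. split; nra.
Qed.

Lemma linear_term_dominates (K1 e k g Em s : R) :
  K1 <> 0 -> 0 < s -> Em * s <= Rabs K1 / 4 -> Rabs e <= Em ->
  Rabs (k - K1) < Rabs K1 / 2 -> Rabs g < Rabs K1 * s / 8 ->
  K1 * (e * s ^ 2 - k * s + g) < 0 /\ 0 < K1 * (e * (- s) ^ 2 - k * - s + g).
Proof.
  intros HK1 Hs HEs He Hk Hg.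
  set (A := Rabs K1) in *.
  assert (HA : 0 < A) by (apply Rabs_pos_lt; exact HK1).
  assert (HA2 : K1 * K1 = A * A) by (unfold A; rewrite <- Rabs_mult, Rabs_right; nra).
  assert (HKk : A * A / 2 < K1 * k).
  { assert (Hdev : Rabs (K1 * (k - K1)) < A * (A / 2))
      by (rewrite Rabs_mult; apply Rmult_lt_compat_l; lra).
    apply Rabs_lt_between in Hdev. nra. }
  assert (HKe : - (A * A / 4) <= K1 * e * s <= A * A / 4).
  { apply Rabs_le_between. rewrite !Rabs_mult, (Rabs_right s) by lra.
    assert (Rabs e * s <= Em * s) by (apply Rmult_le_compat_r; lra).
    pose proof (Rabs_pos e). fold A. nra. }
  assert (HKg : - (A * (A * s / 8)) < K1 * g < A * (A * s / 8)).
  { apply Rabs_lt_between. rewrite Rabs_mult. fold A. apply Rmult_lt_compat_l; lra. }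
  assert (HKes : - (A * A / 4) * s <= K1 * e * s * s <= A * A / 4 * s)
    by (split; apply Rmult_le_compat_r; lra).
  assert (HKks : A * A / 2 * s < K1 * k * s) by (apply Rmult_lt_compat_r; lra).
  split.
  - replace (K1 * (e * s ^ 2 - k * s + g)) with (K1 * e * s * s - K1 * k * s + K1 * g) by ring.
    nra.
  - replace (K1 * (e * (- s) ^ 2 - k * - s + g)) with (K1 * e * s * s + K1 * k * s + K1 * g)
      by ring.
    nra.
Qed.

Section RiccatiComparison.

Variables (a beta Em : R) (q dq B E K G : R -> R).
Hypothesis q_deriv : forall t, a < t -> derivable_pt_lim q t (dq t).
Hypothesis dq_riccati : forall t, a < t -> dq t = B t * (E t * q t ^ 2 - K t * q t + G t).
Hypothesis beta_pos : 0 < beta.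
Hypothesis B_ge : forall t, a < t -> beta <= B t.
Hypothesis E_bound : forall t, a < t -> Rabs (E t) <= Em.
Hypothesis q_osc : oscillates_about_zero q.

Lemma riccati_forced_increase (Km kappa t1 : R) :
  (forall t, a < t -> Rabs (K t) <= Km) -> 0 < kappa -> a < t1 ->
  (forall t, t1 <= t -> kappa <= G t) ->
  exists s0 c, 0 < s0 /\ 0 < c /\ forall t, t1 <= t -> Rabs (q t) <= s0 -> c <= dq t.
Proof.
  intros HK Hkappa Ht1 HG.
  pose proof (Rabs_pos (E t1)). pose proof (E_bound t1 Ht1).
  pose proof (Rabs_pos (K t1)). pose proof (HK t1 Ht1).
  set (s0 := Rmin 1 (kappa / (2 * (Em + Km + 1)))).
  assert (Hs0 : 0 < s0 <= 1).
  { split; [apply Rmin_glb_lt; [lra | apply Rdiv_lt_0_compat; lra] | apply Rmin_l]. }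
  assert (Hsmall : (Em + Km) * s0 <= kappa / 2).
  { assert (Hs0r : s0 <= kappa / (2 * (Em + Km + 1))) by apply Rmin_r.
    apply Rle_div_r in Hs0r; [nra | lra]. }
  exists s0, (beta * kappa / 2). split; [lra |]. split; [nra |].
  intros t Ht Hq. rewrite dq_riccati by lra.
  pose proof (quadratic_small (E t) (K t) (q t) Em Km s0
                (E_bound t ltac:(lra)) (HK t ltac:(lra)) Hq (proj2 Hs0)) as Hquad.
  apply Rabs_le_between in Hquad.
  pose proof (HG t Ht). pose proof (B_ge t ltac:(lra)). nra.
Qed.

Lemma riccati_forcing_not_eventually_pos (Km kappa t1 : R) :
  (forall t, a < t -> Rabs (K t) <= Km) -> 0 < kappa -> a < t1 ->
  ~ (forall t, t1 <= t -> kappa <= G t).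
Proof.
  intros HK Hkappa Ht1 HG. destruct q_osc as [q_lo q_hi].
  destruct (riccati_forced_increase Km kappa t1 HK Hkappa Ht1 HG) as [s0 [c [Hs0 [Hc Hpush]]]].
  destruct (q_hi s0 t1 Hs0) as [t2 [Ht2 Hq2]]; simpl in Hq2.
  assert (Habove : forall t, t2 <= t -> - s0 <= q t).
  { apply (barrier_lower q dq a t2 (- s0) q_deriv); [lra | lra |].
    intros t Ht _ Hqt.
    enough (c <= dq t) by lra.
    apply Hpush; [lra |]. rewrite Hqt, Rabs_Ropp, Rabs_right; lra. }
  destruct (classic (exists t3, t2 <= t3 /\ s0 <= q t3)) as [[t3 [Ht3 Hq3]] | Hbelow].
  - assert (Htop : forall t, t3 <= t -> s0 <= q t).
    { apply (barrier_lower q dq a t3 s0 q_deriv); [lra | exact Hq3 |].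
      intros t Ht _ Hqt.
      enough (c <= dq t) by lra.
      apply Hpush; [lra |]. rewrite Hqt, Rabs_right; lra. }
    destruct (q_lo s0 t3 Hs0) as [t [Ht Hqt]].
    specialize (Htop t Ht). lra.
  - assert (Hband : forall t, t2 <= t -> q t <= s0).
    { intros t Ht. apply Rlt_le, Rnot_le_lt. intro. apply Hbelow. exists t. split; lra. }
    apply (derive_ge_pos_unbounded q dq a t2 c s0 q_deriv); [lra | exact Hc | | exact Hband].
    intros t Ht. apply Hpush; [lra |].
    apply Rabs_le. split; [apply Habove | apply Hband]; lra.
Qed.

Lemma riccati_q_neg_where_potential_high (v om eps : R -> R) (c0 Km del T0 : R) :
  (forall t, a < t -> Rabs (K t) <= Km) ->
  (forall t, a < t -> derivable_pt_lim v t (om t * q t)) -> (forall t, a < t -> 0 < om t) ->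
  (forall t, a < t -> G t = v t - c0 - eps t) -> 0 < del -> a < T0 ->
  (forall t, T0 <= t -> Rabs (eps t) < del / 4) ->
  forall z, T0 <= z -> c0 + del / 2 < v z -> q z < 0.
Proof.
  intros HK Hv Hom HG Hdel HaT0 Heps z Hz Hvz. apply Rnot_le_lt. intro Hqz.
  assert (Heps_small : forall t, z <= t -> - (del / 4) < eps t < del / 4)
    by (intros t Ht; apply Rabs_lt_between, Heps; lra).
  assert (Hmono : forall t, z <= t -> (forall s, z <= s <= t -> 0 <= q s) -> v z <= v t).
  { intros t Ht Hs.
    enough (v z + 0 * (t - z) <= v t) by lra.
    apply (increment_ge_of_derive_ge v (fun x => om x * q x) a z t 0 Hv); [lra | exact Ht |].
    intros s Hs'. pose proof (Hs s Hs'). pose proof (Hom s ltac:(lra)). nra. }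
  assert (Hpos : forall t, z <= t -> 0 <= q t).
  { apply (barrier_lower q dq a z 0 q_deriv); [lra | exact Hqz |].
    intros t Ht Hs Hqt. rewrite dq_riccati, Hqt, HG by lra.
    pose proof (Hmono t Ht Hs). pose proof (Heps_small t Ht).
    pose proof (B_ge t ltac:(lra)). nra. }
  apply (riccati_forcing_not_eventually_pos Km (del / 4) z HK); [lra | lra |].
  intros t Ht. rewrite HG by lra.
  pose proof (Hmono t Ht (fun s Hs => Hpos s ltac:(lra))). pose proof (Heps_small t Ht).
  lra.
Qed.

Lemma riccati_potential_eventually_le (v om eps : R -> R) (c0 Km del : R) :
  (forall t, a < t -> Rabs (K t) <= Km) ->
  (forall t, a < t -> derivable_pt_lim v t (om t * q t)) -> (forall t, a < t -> 0 < om t) ->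
  (forall t, a < t -> G t = v t - c0 - eps t) -> is_lim eps p_infty 0 -> 0 < del ->
  exists T, forall t, T <= t -> v t <= c0 + del.
Proof.
  intros HK Hv Hom HG Heps Hdel.
  destruct (lim_eventually_close eps 0 (del / 4) Heps ltac:(lra)) as [Te HTe].
  set (T0 := Rmax a Te + 1).
  assert (a < T0 /\ Te < T0) as [HaT0 HTeT0]
    by (pose proof (Rmax_l a Te); pose proof (Rmax_r a Te); unfold T0; lra).
  assert (Heps_small : forall t, T0 <= t -> Rabs (eps t) < del / 4)
    by (intros t Ht; rewrite <- (Rminus_0_r (eps t)); apply HTe; lra).
  pose proof (riccati_q_neg_where_potential_high v om eps c0 Km del T0
                HK Hv Hom HG Hdel HaT0 Heps_small) as Hdown.
  destruct (classic (exists t1, T0 <= t1 /\ v t1 <= c0 + del)) as [[t1 [Ht1 Hvt1]] | Hhigh].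
  - exists t1. apply (barrier_upper v (fun x => om x * q x) a t1 (c0 + del) Hv); [lra | exact Hvt1 |].
    intros t Ht _ Hvt. pose proof (Hdown t ltac:(lra) ltac:(lra)). pose proof (Hom t ltac:(lra)). nra.
  - exfalso. apply (riccati_forcing_not_eventually_pos Km (del / 2) T0 HK); [lra | lra |].
    intros t Ht. rewrite HG by lra.
    assert (c0 + del < v t) by (apply Rnot_le_lt; intro; apply Hhigh; exists t; split; lra).
    pose proof (Heps_small t Ht) as He. apply Rabs_def2 in He. lra.
Qed.

Lemma riccati_edge_sign (K1 s : R) :
  K1 <> 0 -> is_lim K p_infty K1 -> is_lim G p_infty 0 -> 0 < s ->
  exists s' T, 0 < s' <= s /\ a < T /\
    forall t, T <= t -> (q t = s' -> K1 * dq t < 0) /\ (q t = - s' -> 0 < K1 * dq t).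
Proof.
  intros HK1 HKlim HGlim Hs.
  set (A := Rabs K1).
  assert (HA : 0 < A) by (apply Rabs_pos_lt; exact HK1).
  pose proof (Rabs_pos (E (a + 1))). pose proof (E_bound (a + 1) ltac:(lra)).
  set (s' := Rmin s (A / (4 * (Em + 1)))).
  assert (Hs' : 0 < s' <= s).
  { split; [apply Rmin_glb_lt; [lra | apply Rdiv_lt_0_compat; lra] | apply Rmin_l]. }
  assert (HEs : Em * s' <= A / 4).
  { assert (Hs'r : s' <= A / (4 * (Em + 1))) by apply Rmin_r.
    apply Rle_div_r in Hs'r; [nra | lra]. }
  destruct (lim_eventually_close K K1 (A / 2) HKlim ltac:(lra)) as [TK HTK].
  destruct (lim_eventually_close G 0 (A * s' / 8) HGlim ltac:(nra)) as [TG HTG].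
  set (T := Rmax a (Rmax TK TG) + 1).
  assert (a < T /\ TK < T /\ TG < T) as [HaT [HTKT HTGT]].
  { pose proof (Rmax_l a (Rmax TK TG)). pose proof (Rmax_r a (Rmax TK TG)).
    pose proof (Rmax_l TK TG). pose proof (Rmax_r TK TG). unfold T. lra. }
  exists s', T. split; [exact Hs' |]. split; [exact HaT |].
  intros t Ht.
  pose proof (HTG t ltac:(lra)) as HGt. rewrite Rminus_0_r in HGt.
  destruct (linear_term_dominates K1 (E t) (K t) (G t) Em s' HK1 (proj1 Hs') HEs
              (E_bound t ltac:(lra)) (HTK t ltac:(lra)) HGt) as [Hhi Hlo].
  pose proof (B_ge t ltac:(lra)).
  rewrite dq_riccati by lra.
  split; intros ->; nra.
Qed.

Lemma riccati_trapping (K1 : R) :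
  K1 <> 0 -> is_lim K p_infty K1 -> is_lim G p_infty 0 -> is_lim q p_infty 0.
Proof.
  intros HK1 HKlim HGlim. apply eventually_close_lim. intros s Hs.
  destruct (riccati_edge_sign K1 (s / 2) HK1 HKlim HGlim ltac:(lra))
    as [s' [T [Hs' [HaT Hedge]]]].
  destruct q_osc as [q_lo q_hi].
  enough (exists T', forall t, T' <= t -> - s' <= q t <= s') as [T' HT'].
  { exists T'. intros t Ht. rewrite Rminus_0_r. apply Rabs_lt_between.
    pose proof (HT' t ltac:(lra)). lra. }
  destruct (Rlt_or_le 0 K1) as [Kpos | Kneg].
  - destruct (q_lo s' T) as [t2 [Ht2 Hq2]]; [lra |].
    assert (Hup : forall t, t2 <= t -> q t <= s').
    { apply (barrier_upper q dq a t2 s' q_deriv); [lra | lra |].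
      intros t Ht _ Hqt. pose proof (proj1 (Hedge t ltac:(lra)) Hqt). nra. }
    destruct (q_hi s' t2) as [t3 [Ht3 Hq3]]; [lra |]. simpl in Hq3.
    assert (Hlow : forall t, t3 <= t -> - s' <= q t).
    { apply (barrier_lower q dq a t3 (- s') q_deriv); [lra | lra |].
      intros t Ht _ Hqt. pose proof (proj2 (Hedge t ltac:(lra)) Hqt). nra. }
    exists t3. intros t Ht. split; [apply Hlow | apply Hup]; lra.
  - assert (Kneg' : K1 < 0) by (destruct Kneg; [lra | congruence]).
    exists T. intros t Ht. split; apply Rnot_lt_le; intro Hout.
    + assert (Hstuck : forall x, t <= x -> q x <= - s').
      { apply (barrier_upper q dq a t (- s') q_deriv); [lra | lra |].
        intros x Hx _ Hqx. pose proof (proj2 (Hedge x ltac:(lra)) Hqx). nra. }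
      destruct (q_hi s' t) as [x [Hx Hqx]]; [lra |]. simpl in Hqx.
      specialize (Hstuck x Hx). lra.
    + assert (Hstuck : forall x, t <= x -> s' <= q x).
      { apply (barrier_lower q dq a t s' q_deriv); [lra | lra |].
        intros x Hx _ Hqx. pose proof (proj1 (Hedge x ltac:(lra)) Hqx). nra. }
      destruct (q_lo s' t) as [x [Hx Hqx]]; [lra |].
      specialize (Hstuck x Hx). lra.
Qed.

End RiccatiComparison.

Lemma derivable_pt_lim_quot (f g : R -> R) (x df dg l : R) :
  derivable_pt_lim f x df -> derivable_pt_lim g x dg -> g x <> 0 ->
  l = (df * g x - f x * dg) / g x ^ 2 -> derivable_pt_lim (fun t => f t / g t) x l.
Proof.
  intros Hf Hg Hgx ->. apply is_derive_Reals, is_derive_div; [apply is_derive_Reals .. |]; assumption.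
Qed.

Section LogDerivativeOfSolution.

Variables (y0 C1 C2 MB K1 K2 : R) (b at_ d eta eta1 eta2 u u1 u2 : R -> R).
Hypothesis b_nz : forall t, y0 < t -> b t <> 0.
Hypothesis eta_pos : forall t, y0 < t -> 0 < eta t.
Hypothesis eta_deriv : forall t, y0 < t -> derivable_pt_lim eta t (eta1 t).
Hypothesis eta1_deriv : forall t, y0 < t -> derivable_pt_lim eta1 t (eta2 t).
Hypothesis u_deriv : forall t, y0 < t -> derivable_pt_lim u t (u1 t).
Hypothesis u1_deriv : forall t, y0 < t -> derivable_pt_lim u1 t (u2 t).
Hypothesis u_ode : forall t, y0 < t ->
  0 = 1 / 2 * b t ^ 2 * u2 t + at_ t * u1 t + eta t * u t - u t ^ 2 - d t * u1 t ^ 2 / u t.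
Hypothesis C1_pos : 0 < C1.
Hypothesis u_comparable : forall t, y0 < t -> C1 * eta t <= u t <= C2 * eta t.
Hypothesis b2_eta_bound : forall t, y0 < t -> Rabs (b t ^ 2 / eta t) <= MB.
Hypothesis Psi_lim : is_lim (Psi b at_ d eta eta1 eta2) p_infty 1.
Hypothesis K1_nz : K1 <> 0.
Hypothesis K_lim :
  is_lim (fun t => at_ t / eta t + (b t ^ 2 - 2 * d t) * eta1 t / eta t ^ 2) p_infty K1.
Hypothesis d_eta_lim : is_lim (fun t => d t / eta t) p_infty K2.
Hypothesis eta_logderiv_lim : is_lim (fun t => eta1 t / eta t) p_infty 0.

Let w (t : R) : R := u t / eta t.
Let q (t : R) : R := u1 t / u t - eta1 t / eta t.
Let dq (t : R) : R :=
  (u2 t * u t - u1 t * u1 t) / u t ^ 2 - (eta2 t * eta t - eta1 t * eta1 t) / eta t ^ 2.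
Let B (t : R) : R := 2 * eta t / b t ^ 2.
Let E (t : R) : R := d t / eta t - b t ^ 2 / (2 * eta t).
Let K (t : R) : R := at_ t / eta t + (b t ^ 2 - 2 * d t) * eta1 t / eta t ^ 2.
Let eps (t : R) : R := Psi b at_ d eta eta1 eta2 t - 1.

Lemma u_pos (t : R) : y0 < t -> 0 < u t.
Proof. intros Ht. pose proof (u_comparable t Ht). pose proof (eta_pos t Ht). nra. Qed.

Lemma ratio_bounds (t : R) : y0 < t -> C1 <= w t <= C2.
Proof.
  intros Ht. pose proof (u_comparable t Ht). pose proof (eta_pos t Ht).
  unfold w. split; [apply Rle_div_r | apply Rle_div_l]; lra.
Qed.

Lemma ratio_deriv (t : R) : y0 < t -> derivable_pt_lim w t (w t * q t).
Proof.
  intros Ht. pose proof (u_pos t Ht). pose proof (eta_pos t Ht).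
  eapply derivable_pt_lim_quot; [apply u_deriv, Ht | apply eta_deriv, Ht | lra |].
  unfold w, q. field. lra.
Qed.

Lemma q_deriv (t : R) : y0 < t -> derivable_pt_lim q t (dq t).
Proof.
  intros Ht. pose proof (u_pos t Ht). pose proof (eta_pos t Ht).
  apply (derivable_pt_lim_minus (fun t => u1 t / u t) (fun t => eta1 t / eta t)).
  - eapply derivable_pt_lim_quot; [apply u1_deriv, Ht | apply u_deriv, Ht | lra | field; lra].
  - eapply derivable_pt_lim_quot; [apply eta1_deriv, Ht | apply eta_deriv, Ht | lra | field; lra].
Qed.

Lemma q_riccati (t : R) : y0 < t ->
  dq t = B t * (E t * q t ^ 2 - K t * q t + (w t - 1 - eps t)).
Proof.
  intros Ht. pose proof (u_pos t Ht). pose proof (eta_pos t Ht). pose proof (b_nz t Ht).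
  assert (Hu2 : u2 t = - (2 / b t ^ 2) *
                  (at_ t * u1 t + eta t * u t - u t ^ 2 - d t * u1 t ^ 2 / u t)).
  { assert (Hlin : at_ t * u1 t + eta t * u t - u t ^ 2 - d t * u1 t ^ 2 / u t =
                   - (1 / 2 * b t ^ 2 * u2 t))
      by (pose proof (u_ode t Ht); lra).
    rewrite Hlin. field. assumption. }
  unfold dq, B, E, K, q, w, eps, Psi. rewrite Hu2. field. repeat split; lra.
Qed.

Lemma B_ge (t : R) : y0 < t -> 2 / MB <= B t.
Proof.
  intros Ht. pose proof (eta_pos t Ht). pose proof (b_nz t Ht).
  pose proof (b2_eta_bound t Ht) as HMB.
  assert (Hpos : 0 < b t ^ 2 / eta t) by (apply Rdiv_lt_0_compat; [apply pow2_gt_0 |]; assumption).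
  rewrite Rabs_right in HMB by lra.
  replace (B t) with (2 / (b t ^ 2 / eta t)) by (unfold B; field; split; [assumption | lra]).
  apply Rmult_le_compat_l; [lra |]. apply Rinv_le_contravar; assumption.
Qed.

Lemma two_div_MB_pos : 0 < 2 / MB.
Proof.
  pose proof (eta_pos (y0 + 1) ltac:(lra)). pose proof (b_nz (y0 + 1) ltac:(lra)).
  pose proof (b2_eta_bound (y0 + 1) ltac:(lra)).
  apply Rdiv_lt_0_compat; [lra |].
  assert (0 < Rabs (b (y0 + 1) ^ 2 / eta (y0 + 1))); [| lra].
  apply Rabs_pos_lt, Rgt_not_eq, Rdiv_lt_0_compat; [apply pow2_gt_0 |]; assumption.
Qed.

Lemma q_oscillates : oscillates_about_zero q.
Proof.
  split.
  - apply (liminf_nonpos_of_primitive_bounded_above w w q y0 C1 C2 ratio_deriv C1_pos);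
      intros t Ht; apply (ratio_bounds t Ht).
  - apply (liminf_nonpos_of_primitive_bounded_above (fun t => - w t) w _ y0 C1 (- C1));
      [| exact C1_pos | intros t Ht; apply (ratio_bounds t Ht) |].
    + intros t Ht. replace (w t * - q t) with (- (w t * q t)) by ring.
      apply derivable_pt_lim_opp, ratio_deriv, Ht.
    + intros t Ht. pose proof (ratio_bounds t Ht). lra.
Qed.

Lemma coefficients_eventually_bounded :
  exists a0, y0 <= a0 /\ forall t, a0 < t ->
    Rabs (E t) <= Rabs K2 + 1 + MB / 2 /\ Rabs (K t) <= Rabs K1 + 1.
Proof.
  destruct (lim_eventually_close _ _ 1 d_eta_lim Rlt_0_1) as [TD HTD].
  destruct (lim_eventually_close _ _ 1 K_lim Rlt_0_1) as [TK HTK].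
  exists (Rmax y0 (Rmax TD TK)).
  pose proof (Rmax_l y0 (Rmax TD TK)). pose proof (Rmax_r y0 (Rmax TD TK)).
  pose proof (Rmax_l TD TK). pose proof (Rmax_r TD TK).
  split; [lra |]. intros t Ht.
  pose proof (HTD t ltac:(lra)) as HD. pose proof (HTK t ltac:(lra)) as HK.
  pose proof (b2_eta_bound t ltac:(lra)) as HMB. pose proof (eta_pos t ltac:(lra)).
  apply Rabs_lt_between in HD, HK. apply Rabs_le_between in HMB.
  pose proof (Rle_abs K1). pose proof (Rle_abs (- K1)).
  pose proof (Rle_abs K2). pose proof (Rle_abs (- K2)). rewrite Rabs_Ropp in *.
  unfold E, K. replace (b t ^ 2 / (2 * eta t)) with (b t ^ 2 / eta t / 2) by (field; lra).
  split; apply Rabs_le_between; lra.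
Qed.

Lemma eps_lim : is_lim eps p_infty 0.
Proof.
  replace (Finite 0) with (Finite (1 - 1)) by (f_equal; ring).
  apply (is_lim_minus' (Psi b at_ d eta eta1 eta2) (fun _ => 1)); [exact Psi_lim | apply is_lim_const].
Qed.

Lemma ratio_eventually_le (del : R) : 0 < del -> exists T, forall t, T <= t -> w t <= 1 + del.
Proof.
  intros Hdel. destruct coefficients_eventually_bounded as [a0 [Ha0 Hbd]].
  assert (Hy : forall t, a0 < t -> y0 < t) by (intros; lra).
  apply (riccati_potential_eventually_le a0 (2 / MB) (Rabs K2 + 1 + MB / 2) q dq B E K
           (fun t => w t - 1 - eps t) (fun t Ht => q_deriv t (Hy t Ht))
           (fun t Ht => q_riccati t (Hy t Ht)) two_div_MB_pos (fun t Ht => B_ge t (Hy t Ht))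
           (fun t Ht => proj1 (Hbd t Ht)) q_oscillates w w eps 1 (Rabs K1 + 1) del
           (fun t Ht => proj2 (Hbd t Ht)) (fun t Ht => ratio_deriv t (Hy t Ht)));
    [| reflexivity | exact eps_lim | exact Hdel].
  intros t Ht. pose proof (ratio_bounds t (Hy t Ht)). lra.
Qed.

Lemma ratio_eventually_ge (del : R) : 0 < del -> exists T, forall t, T <= t -> 1 - del <= w t.
Proof.
  intros Hdel. destruct coefficients_eventually_bounded as [a0 [Ha0 Hbd]].
  assert (Hy : forall t, a0 < t -> y0 < t) by (intros; lra).
  assert (Hriccati : forall t, a0 < t -> - dq t =
            B t * (- E t * (- q t) ^ 2 - K t * - q t + - (w t - 1 - eps t)))
    by (intros t Ht; rewrite (q_riccati t (Hy t Ht)); ring).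
  assert (HE : forall t, a0 < t -> Rabs (- E t) <= Rabs K2 + 1 + MB / 2)
    by (intros t Ht; rewrite Rabs_Ropp; apply (Hbd t Ht)).
  assert (Hv : forall t, a0 < t -> derivable_pt_lim (fun t => - w t) t (w t * - q t)).
  { intros t Ht. replace (w t * - q t) with (- (w t * q t)) by ring.
    apply derivable_pt_lim_opp, ratio_deriv, Hy, Ht. }
  enough (exists T, forall t, T <= t -> - w t <= - 1 + del) as [T HT]
    by (exists T; intros t Ht; specialize (HT t Ht); lra).
  apply (riccati_potential_eventually_le a0 (2 / MB) (Rabs K2 + 1 + MB / 2)
           (fun t => - q t) (fun t => - dq t) B (fun t => - E t) K
           (fun t => - (w t - 1 - eps t))
           (fun t Ht => derivable_pt_lim_opp _ _ _ (q_deriv t (Hy t Ht))) Hriccati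
           two_div_MB_pos (fun t Ht => B_ge t (Hy t Ht)) HE
           (oscillates_about_zero_opp q q_oscillates) (fun t => - w t) w (fun t => - eps t)
           (- 1) (Rabs K1 + 1) del (fun t Ht => proj2 (Hbd t Ht)) Hv);
    [| intros t Ht; ring | | exact Hdel].
  - intros t Ht. pose proof (ratio_bounds t (Hy t Ht)). lra.
  - replace (Finite 0) with (Rbar_opp 0) by (simpl; f_equal; ring).
    apply is_lim_opp, eps_lim.
Qed.

Lemma ratio_lim : is_lim w p_infty 1.
Proof.
  apply eventually_close_lim. intros e He.
  destruct (ratio_eventually_le (e / 2) ltac:(lra)) as [T1 HT1].
  destruct (ratio_eventually_ge (e / 2) ltac:(lra)) as [T2 HT2].
  exists (Rmax T1 T2). intros t Ht.
  pose proof (Rmax_l T1 T2). pose proof (Rmax_r T1 T2).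
  pose proof (HT1 t ltac:(lra)). pose proof (HT2 t ltac:(lra)).
  apply Rabs_lt_between. lra.
Qed.

Lemma q_lim : is_lim q p_infty 0.
Proof.
  destruct coefficients_eventually_bounded as [a0 [Ha0 Hbd]].
  assert (Hy : forall t, a0 < t -> y0 < t) by (intros; lra).
  apply (riccati_trapping a0 (2 / MB) (Rabs K2 + 1 + MB / 2) q dq B E K
           (fun t => w t - 1 - eps t) (fun t Ht => q_deriv t (Hy t Ht))
           (fun t Ht => q_riccati t (Hy t Ht)) two_div_MB_pos (fun t Ht => B_ge t (Hy t Ht))
           (fun t Ht => proj1 (Hbd t Ht)) q_oscillates K1 K1_nz K_lim).
  replace (Finite 0) with (Finite (1 - 1 - 0)) by (f_equal; ring).
  apply is_lim_minus'; [apply is_lim_minus'; [exact ratio_lim | apply is_lim_const] | exact eps_lim].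
Qed.

Lemma u_logderiv_lim : is_lim (fun t => u1 t / u t) p_infty 0.
Proof.
  apply (is_lim_ext_loc (fun t => q t + eta1 t / eta t)).
  - exists y0. intros t Ht. unfold q. ring.
  - replace (Finite 0) with (Finite (0 + 0)) by (f_equal; ring).
    apply is_lim_plus'; [exact q_lim | exact eta_logderiv_lim].
Qed.

End LogDerivativeOfSolution.

Lemma derivable_pt_lim_of_deriv_within_ray (y0 : R) (f : R -> R) (x l : R) :
  y0 < x -> is_deriv_within (ray y0) f x l -> derivable_pt_lim f x l.
Proof.
  intros Hx H e He.
  destruct (proj1 (filterlim_locally _ _) H (mkposreal e He)) as [r Hr].
  assert (Hdel : 0 < Rmin r (x - y0)) by (apply Rmin_glb_lt; [apply cond_pos | lra]).
  exists (mkposreal _ Hdel). intros h Hh Hhdel. simpl in Hhdel.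
  pose proof (Rmin_l r (x - y0)). pose proof (Rmin_r r (x - y0)).
  apply Rabs_lt_between in Hhdel.
  assert (Hball : ball x r (x + h))
    by (change (Rabs (x + h - x) < r); apply Rabs_lt_between; lra).
  assert (Hin : ray y0 (x + h) /\ x + h <> x) by (split; [unfold ray | intro]; lra).
  specialize (Hr (x + h) Hball Hin).
  change (Rabs ((f (x + h) - f x) / (x + h - x) - l) < e) in Hr.
  replace (x + h - x) with h in Hr by ring. exact Hr.
Qed.

Theorem corollary4p12
  (Em : Rbar) (r lam sigma a b rho delta : R -> R) (Rr : R) (y0 : R)
  (eta1 eta2 u u1 u2 : R -> R) (C1 C2 K1 K2 : R) :
  (* standing assumptions *)
  loc_lipschitz_on (inE Em) r -> loc_lipschitz_on (inE Em) lam ->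
  loc_lipschitz_on (inE Em) sigma -> loc_lipschitz_on (inE Em) a ->
  loc_lipschitz_on (inE Em) b -> loc_lipschitz_on (inE Em) rho ->
  loc_lipschitz_on (inE Em) delta ->
  (forall y, inE Em y -> 0 < sigma y) ->
  (forall y, inE Em y -> b y <> 0) ->
  (forall y, inE Em y -> -1 <= rho y <= 1) ->
  0 < Rr -> Rr <> 1 ->
  inE Em y0 ->
  let eta := eta_fn Rr r lam delta in
  let at_ := atilde_fn Rr a rho lam b in
  let d := d_fn Rr b rho in
  (* (A1): eta > 0 and eta in C^2([y0,oo)) with eta' = eta1, eta'' = eta2 *)
  (forall y, y0 <= y -> 0 < eta y) ->
  (forall y, y0 <= y ->
     is_deriv_within (ray y0) eta y (eta1 y) /\
     is_deriv_within (ray y0) eta1 y (eta2 y) /\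
     cont_within (ray y0) eta2 y) ->
  (* (A2) *)
  bounded_on (ray y0) (fun y => b y ^ 2 / eta y) ->
  bounded_on (ray y0) (fun y => at_ y / eta y) ->
  bounded_on (ray y0) (fun y => eta1 y / eta y) ->
  (* (A3) *)
  is_lim (Psi b at_ d eta eta1 eta2) p_infty (Finite 1) ->
  (* u is a solution on [y0,oo) with u' = u1, u'' = u2 *)
  (forall y, y0 <= y ->
     is_deriv_within (ray y0) u y (u1 y) /\
     is_deriv_within (ray y0) u1 y (u2 y)) ->
  (forall y, y0 <= y ->
     0 = 1 / 2 * b y ^ 2 * u2 y + at_ y * u1 y + eta y * u y - u y ^ 2
         - d y * u1 y ^ 2 / u y) ->
  0 < C1 -> C1 < C2 ->
  (forall y, y0 <= y -> C1 * eta y <= u y <= C2 * eta y) ->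
  K1 <> 0 -> K2 <> 0 ->
  is_lim (fun y => at_ y / eta y + (b y ^ 2 - 2 * d y) * eta1 y / eta y ^ 2)
    p_infty (Finite K1) ->
  is_lim (fun y => d y / eta y) p_infty (Finite K2) ->
  is_lim (fun y => eta1 y / eta y) p_infty (Finite 0) ->
  is_lim (fun y => u1 y / u y) p_infty (Finite 0).
Proof.
  intros _ _ _ _ _ _ _ _ b_nz _ _ _ y0_in eta at_ d eta_pos eta_C2 [MB HMB] _ _ Psi_lim
    u_C2 u_ode C1_pos _ u_comparable K1_nz _ K_lim d_eta_lim eta_logderiv_lim.
  assert (Hb : forall t, y0 < t -> b t <> 0)
    by (intros t Ht; apply b_nz, (Rbar_lt_le_trans _ y0); [exact y0_in | simpl; lra]).
  apply (u_logderiv_lim y0 C1 C2 MB K1 K2 b at_ d eta eta1 eta2 u u1 u2 Hb);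
    try assumption; intros t Ht.
  - apply eta_pos; lra.
  - apply (derivable_pt_lim_of_deriv_within_ray y0); [exact Ht | apply eta_C2; lra].
  - apply (derivable_pt_lim_of_deriv_within_ray y0); [exact Ht | apply eta_C2; lra].
  - apply (derivable_pt_lim_of_deriv_within_ray y0); [exact Ht | apply u_C2; lra].
  - apply (derivable_pt_lim_of_deriv_within_ray y0); [exact Ht | apply u_C2; lra].
  - apply u_ode; lra.
  - apply u_comparable; lra.
  - apply HMB; unfold ray; lra.
Qed.
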